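(* For every integer $h\ge2$, the numerical semigroup $\Gamma_{A_h}=\langle h(h+1),\,h(h+1)+1,\,(h+1)^2,\,(h+1)^2+1\rangle$ is homogeneous.
   Context: For a numerical semigroup $\Gamma=\langle n_1,\dots,n_e\rangle$ (minimally generated, here with $n_1=h(h+1)$) and $0\neq s\in\Gamma$, the set of lengths is $\mathcal T(s)=\{\sum_i r_i : s=\sum_i r_in_i,\ r_i\in\mathbb{N}\}$. A subset $T\subset\Gamma$ is homogeneous if it is empty or $\mathcal T(s)$ is a singleton for all $0\neq s\in T$. $\Gamma$ is homogeneous if the Apéry set $\mathrm{Ap}(\Gamma,n_1)=\{s\in\Gamma: s-n_1\notin\Gamma\}$ is homogeneous. *)

From mathcomp Require Import all_boot.
Unset Strict Implicit. Unset Printing Implicit Defensive.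

(* A numerical semigroup is given by its list of generators [gens] = [n_1; ...; n_e]. *)

Definition factorization (gens : seq nat) (s : nat) (r : 'I_(size gens) -> nat) : Prop :=
  s = \sum_(i < size gens) r i * nth 0 gens i.

Definition in_semigroup (gens : seq nat) (s : nat) : Prop :=
  exists r : 'I_(size gens) -> nat, factorization gens s r.

Definition in_lengths (gens : seq nat) (s l : nat) : Prop :=
  exists r : 'I_(size gens) -> nat, factorization gens s r /\ l = \sum_(i < size gens) r i.

Definition homogeneous_set (gens : seq nat) (T : nat -> Prop) : Prop :=
  (forall s, ~ T s) \/
  (forall s, T s -> s <> 0 -> exists l, forall l', in_lengths gens s l' <-> l' = l).

(* Apery set Ap(Gamma, n) = { s in Gamma | s - n notin Gamma } (s - n taken in Z,
   so s < n means s - n is negative hence not in Gamma). *)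
Definition apery (gens : seq nat) (n : nat) (s : nat) : Prop :=
  in_semigroup gens s /\ ~ (n <= s /\ in_semigroup gens (s - n)).

Definition homogeneous_semigroup (gens : seq nat) : Prop :=
  homogeneous_set gens (apery gens (head 0 gens)).

Definition gens_A (h : nat) : seq nat :=
  [:: h * (h + 1); h * (h + 1) + 1; (h + 1) ^ 2; (h + 1) ^ 2 + 1].

From mathcomp Require Import all_boot zify ring.

(* Write a = h(h+1), so the generators are a, a+1, c = a+h+1 and d = a+h+2, and a
   factorization (w, x, y, z) of s gives s = (w+x+y+z) a + (x + (h+1) y + (h+2) z).
   If s lies in the Apery set, s - a is not in the semigroup, and the exchanges
     (h-j) c + j d = a + (h-j) a + j (a+1),      (a+1) + c = a + d,
     (t+2)(a+1) + z d = a + t a + (z+1) c   (h = z+1+t)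
   force w = 0, y + z < h, x y = 0 and x + z <= h. Then the excess
   x + (h+1) y + (h+2) z is below a, so every factorization of s has length s %/ a. *)


Lemma homogeneous_semigroup_uniform_length (gens : seq nat) (len : nat -> nat) :
  (forall s r, apery gens (head 0 gens) s -> factorization gens s r ->
     \sum_(i < size gens) r i = len s) ->
  homogeneous_semigroup gens.
Proof.
move=> uniform; right=> s Ap _; exists (len s) => l; split.
- by case=> r [Fr ->]; exact: uniform Fr.
- by case: (Ap) => [[r Fr] _] ->; exists r; split=> //; rewrite (uniform s r).
Qed.

Lemma apery_addl (gens : seq nat) (n s : nat) :
  in_semigroup gens s -> ~ apery gens n (n + s).
Proof. by move=> Gs [_]; apply; rewrite leq_addr addKn. Qed.

Definition lincomb_A (h w x y z : nat) : nat :=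
  w * (h * (h + 1)) + x * (h * (h + 1) + 1) + y * (h + 1) ^ 2 + z * ((h + 1) ^ 2 + 1).

Lemma factorization_gens_AP (h s : nat) (r : 'I_(size (gens_A h)) -> nat) :
  factorization (gens_A h) s r ->
  exists w x y z, s = lincomb_A h w x y z /\ \sum_(i < size (gens_A h)) r i = w + x + y + z.
Proof.
rewrite /factorization !big_ord_recl !big_ord0 /= => ->.
exists (r ord0), (r (lift ord0 ord0)), (r (lift ord0 (lift ord0 ord0))),
  (r (lift ord0 (lift ord0 (lift ord0 ord0)))).
by rewrite /lincomb_A !addn0 !addnA.
Qed.

Lemma lincomb_A_in_semigroup (h w x y z : nat) :
  in_semigroup (gens_A h) (lincomb_A h w x y z).
Proof.
exists (fun i => nth 0 [:: w; x; y; z] i).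
by rewrite /factorization !big_ord_recl big_ord0 /= /lincomb_A; ring.
Qed.

Lemma lincomb_A_split (h w x y z : nat) :
  lincomb_A h w x y z = (w + x + y + z) * (h * (h + 1)) + (x + (h + 1) * y + (h + 2) * z).
Proof. by rewrite /lincomb_A; ring. Qed.

Lemma excess_A_lt (h x y z : nat) :
  y + z < h -> x = 0 \/ y = 0 -> x + z <= h -> x + (h + 1) * y + (h + 2) * z < h * (h + 1).
Proof. move=> yz [] -> xz; nia. Qed.

Lemma apery_A_excess_lt (h w x y z : nat) :
  apery (gens_A h) (h * (h + 1)) (lincomb_A h w x y z) ->
  x + (h + 1) * y + (h + 2) * z < h * (h + 1).
Proof.
move=> Ap.
have {Ap} not_a_plus p q u v : lincomb_A h w x y z <> h * (h + 1) + lincomb_A h p q u v.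
  move=> E; apply: (apery_addl _ (h * (h + 1)) _ (lincomb_A_in_semigroup h p q u v)).
  by rewrite -E.
have w0 : w = 0.
  case: w not_a_plus => // w not_a_plus.
  by case: (not_a_plus w x y z); rewrite /lincomb_A; ring.
have yz : y + z < h.
  rewrite ltnNge; apply/negP => yz_ge.
  have [t [j [y' [z' [Eh Ey Ez]]]]] :
      exists t j y' z', [/\ h = t + j, y = t + y' & z = j + z'].
    by exists (h - minn z h), (minn z h), (y - (h - minn z h)), (z - minn z h); split; lia.
  by apply: (not_a_plus t (x + j) y' z'); rewrite w0 Ey Ez /lincomb_A Eh; ring.
have xy : x = 0 \/ y = 0.
  case: x y yz not_a_plus => [|x] [|y] yz not_a_plus; [by left | by left | by right |].
  by case: (not_a_plus 0 x y z.+1); rewrite w0 /lincomb_A; ring.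
have xz : x + z <= h.
  case: xy => [-> | y0]; first lia.
  rewrite leqNgt; apply/negP => xz_gt.
  have [t [q [Eh Ex]]] : exists t q, h = z + 1 + t /\ x = t + 2 + q.
    by exists (h - z - 1), (x - (h - z - 1) - 2); lia.
  by apply: (not_a_plus t q (z + 1) 0); rewrite w0 y0 Ex /lincomb_A Eh; ring.
exact: excess_A_lt.
Qed.

Theorem mainTheorem5 (h : nat) : 2 <= h -> homogeneous_semigroup (gens_A h).
Proof.
move=> h2; apply: (homogeneous_semigroup_uniform_length _ (fun s => s %/ (h * (h + 1)))).
move=> s r Ap /factorization_gens_AP [w [x [y [z [Es ->]]]]].
have a_gt0 : 0 < h * (h + 1) by nia.
rewrite Es in Ap *; rewrite lincomb_A_split divnMDl // divn_small ?addn0 //.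
exact: apery_A_excess_lt Ap.
Qed.
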